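(* (1) For all $\mathtt{dCBN}$ terms $M,N$: $M^n\{N^n/x\} = (M\{N/x\})^n$. (2) For all $\mathtt{dCBV}$ terms $M,N$: if $N^v = !P$ for some $P$, then $(M\{N/x\})^v = M^v\{P/x\}$.
   Context: $\mathtt{dCBN}$ and $\mathtt{dCBV}$ share the syntax $M,N::=x\mid\lambda x.M\mid MN\mid M[N/x]$ ($M[N/x]$ an explicit substitution binding $x$); $M\{N/x\}$ is capture-avoiding substitution. List contexts $L::=\square\mid L[N/x]$. $\mathtt{dBang}$ terms are $M ::= x\mid\lambda x.M\mid MN\mid M[N/x]\mid\ !M\mid\mathrm{der}\,M$. The translation $(\cdot)^n$ into $\mathtt{dBang}$: $x^n=x$, $(\lambda x.M)^n=\lambda x.M^n$, $(MN)^n=M^n\,!N^n$, $(M[N/x])^n=M^n[!N^n/x]$. The translation $(\cdot)^v$: $x^v=!x$, $(\lambda x.M)^v=!(\lambda x.M^v)$, $(MN)^v=L\langle P\rangle N^v$ if $M^v=L\langle !P\rangle$ for a $\mathtt{dBang}$ list context $L$, and $(MN)^v=\mathrm{der}(M^v)\,N^v$ otherwise; $(M[N/x])^v=M^v[N^v/x]$. *)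

(* Terms in de Bruijn representation, so that syntactic
   equality coincides with alpha-equivalence. *)
From Stdlib Require Import Arith.

(* dCBN / dCBV terms: x | \x.M | M N | M[N/x]  (ES M N binds index 0 in M) *)
Inductive term : Type :=
| Var : nat -> term
| Lam : term -> term
| App : term -> term -> term
| ES  : term -> term -> term.

Inductive bterm : Type :=
| BVar : nat -> bterm
| BLam : bterm -> bterm
| BApp : bterm -> bterm -> bterm
| BES  : bterm -> bterm -> bterm
| Bang : bterm -> bterm
| Der  : bterm -> bterm.

Fixpoint lift (k : nat) (t : term) : term :=
  match t with
  | Var n => if k <=? n then Var (S n) else Var n
  | Lam m => Lam (lift (S k) m)
  | App m n => App (lift k m) (lift k n)
  | ES m n => ES (lift (S k) m) (lift k n)
  end.

Fixpoint subst (k : nat) (N : term) (t : term) : term :=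
  match t with
  | Var n => match Nat.compare n k with
             | Lt => Var n
             | Eq => N
             | Gt => Var (pred n)
             end
  | Lam m => Lam (subst (S k) (lift 0 N) m)
  | App m n => App (subst k N m) (subst k N n)
  | ES m n => ES (subst (S k) (lift 0 N) m) (subst k N n)
  end.

Fixpoint blift (k : nat) (t : bterm) : bterm :=
  match t with
  | BVar n => if k <=? n then BVar (S n) else BVar n
  | BLam m => BLam (blift (S k) m)
  | BApp m n => BApp (blift k m) (blift k n)
  | BES m n => BES (blift (S k) m) (blift k n)
  | Bang m => Bang (blift k m)
  | Der m => Der (blift k m)
  end.

Fixpoint bsubst (k : nat) (N : bterm) (t : bterm) : bterm :=
  match t with
  | BVar n => match Nat.compare n k with
              | Lt => BVar n
              | Eq => N
              | Gt => BVar (pred n)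
              end
  | BLam m => BLam (bsubst (S k) (blift 0 N) m)
  | BApp m n => BApp (bsubst k N m) (bsubst k N n)
  | BES m n => BES (bsubst (S k) (blift 0 N) m) (bsubst k N n)
  | Bang m => Bang (bsubst k N m)
  | Der m => Der (bsubst k N m)
  end.

Fixpoint trn (t : term) : bterm :=
  match t with
  | Var x => BVar x
  | Lam m => BLam (trn m)
  | App m n => BApp (trn m) (Bang (trn n))
  | ES m n => BES (trn m) (Bang (trn n))
  end.

(* If t = L<!P> for a list context L, returns Some L<P>, else None. *)
Fixpoint strip_bang (t : bterm) : option bterm :=
  match t with
  | Bang p => Some p
  | BES m n => match strip_bang m with
               | Some q => Some (BES q n)
               | None => None
               end
  | _ => None
  end.

Fixpoint trv (t : term) : bterm :=
  match t with
  | Var x => Bang (BVar x)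
  | Lam m => Bang (BLam (trv m))
  | App m n => match strip_bang (trv m) with
               | Some lp => BApp lp (trv n)
               | None => BApp (Der (trv m)) (trv n)
               end
  | ES m n => BES (trv m) (trv n)
  end.

(* Both translations commute with lifting, so they commute with
   substitution by induction on M.  For CBV the only subtle case is an
   application, whose translation depends on whether the translated head
   has the shape L<!P>; substitution preserves that shape because the head
   of the explicit-substitution spine of a CBV translation is never a
   variable, and substituting !P for x turns the CBV variable !x into !P. *)
From Stdlib Require Import Arith.

Lemma trn_lift (t : term) (k : nat) : trn (lift k t) = blift k (trn t).
Proof.
  revert k; induction t; intros k; simpl; try (rewrite ?IHt, ?IHt1, ?IHt2; reflexivity).
  destruct (k <=? n); reflexivity.
Qed.

Lemma trn_subst (M N : term) (x : nat) :
  bsubst x (trn N) (trn M) = trn (subst x N M).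
Proof.
  revert N x; induction M; intros N x; simpl.
  - destruct (Nat.compare n x); reflexivity.
  - rewrite <- trn_lift, IHM; reflexivity.
  - rewrite IHM1, IHM2; reflexivity.
  - rewrite <- trn_lift, IHM1, IHM2; reflexivity.
Qed.

Lemma strip_bang_blift (t : bterm) (k : nat) :
  strip_bang (blift k t) = option_map (blift k) (strip_bang t).
Proof.
  revert k; induction t; intros k; simpl; try reflexivity.
  - destruct (k <=? n); reflexivity.
  - rewrite IHt1; destruct (strip_bang t1); reflexivity.
Qed.

Lemma trv_lift (t : term) (k : nat) : trv (lift k t) = blift k (trv t).
Proof.
  revert k; induction t; intros k; simpl.
  - destruct (k <=? n); reflexivity.
  - rewrite IHt; reflexivity.
  - rewrite IHt1, IHt2, strip_bang_blift.
    destruct (strip_bang (trv t1)); reflexivity.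
  - rewrite IHt1, IHt2; reflexivity.
Qed.

Fixpoint spine_head_nonvar (t : bterm) : Prop :=
  match t with
  | BVar _ => False
  | BES m _ => spine_head_nonvar m
  | _ => True
  end.

Lemma trv_spine_head_nonvar (t : term) : spine_head_nonvar (trv t).
Proof.
  induction t; simpl; auto.
  destruct (strip_bang (trv t1)); simpl; exact I.
Qed.

Lemma strip_bang_bsubst (t : bterm) (k : nat) (P : bterm) :
  spine_head_nonvar t ->
  strip_bang (bsubst k P t) = option_map (bsubst k P) (strip_bang t).
Proof.
  revert k P; induction t; intros k P Ht; simpl in *; try reflexivity.
  - contradiction.
  - rewrite IHt1 by exact Ht; destruct (strip_bang t1); reflexivity.
Qed.

Lemma trv_lift_bang {t : term} {P : bterm} :
  trv t = Bang P -> trv (lift 0 t) = Bang (blift 0 P).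
Proof. intros Ht; rewrite trv_lift, Ht; reflexivity. Qed.

Lemma trv_subst (M N : term) (x : nat) (P : bterm) :
  trv N = Bang P -> trv (subst x N M) = bsubst x P (trv M).
Proof.
  revert N x P; induction M; intros N x P HN; simpl.
  - destruct (Nat.compare n x); simpl; auto.
  - rewrite (IHM _ _ _ (trv_lift_bang HN)); reflexivity.
  - rewrite (IHM1 _ _ _ HN), (IHM2 _ _ _ HN), strip_bang_bsubst
      by apply trv_spine_head_nonvar.
    destruct (strip_bang (trv M1)); reflexivity.
  - rewrite (IHM1 _ _ _ (trv_lift_bang HN)), (IHM2 _ _ _ HN); reflexivity.
Qed.

Theorem mainTheorem6 :
  (forall (M N : term) (x : nat),
      bsubst x (trn N) (trn M) = trn (subst x N M)) /\
  (forall (M N : term) (x : nat) (P : bterm),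
      trv N = Bang P -> trv (subst x N M) = bsubst x P (trv M)).
Proof.
  split.
  - exact trn_subst.
  - exact trv_subst.
Qed.
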